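(* Let $n\ge1$ and let $\alpha=(\alpha_1,\dots,\alpha_k)$ be a composition of $n$ (positive integers summing to $n$), and work over the alphabet $A=\{a_1<a_2<\dots<a_k\}$. Then $$|\{w\in\mathcal{W}^o_n:\operatorname{wt}(w)=x_1^{\alpha_1}\cdots x_k^{\alpha_k}\}|=|\{w\in\mathcal{W}^e_n:\operatorname{wt}(w)=x_1^{\alpha_1}\cdots x_k^{\alpha_k}\}|.$$
   Context: Words are finite sequences of letters from the totally ordered alphabet $A=\{a_1<\dots<a_k\}$; $\mathcal{W}_n$ is the set of words of length $n$. Words are compared in lexicographic order (a proper prefix is smaller than the word). Two words $u,v$ are conjugate if $u=rs$ and $v=sr$ for some words $r,s$. A nonempty word is primitive if it is not of the form $r^j$ with $j\ge2$. A Lyndon word is a primitive word strictly smaller than all its other conjugates (equivalently, a nonempty word strictly smaller than each of its proper nonempty suffixes). Every word $w$ has a unique Lyndon factorization $w=\ell_1\ell_2\cdots\ell_m$ with each $\ell_i$ a Lyndon word and $\ell_1\ge\ell_2\ge\dots\ge\ell_m$; the $\ell_i$ are the Lyndon factors of $w$. The weight of a word is $\operatorname{wt}(w)=x_1^{\beta_1}\cdots x_k^{\beta_k}$ where $\beta_i$ is the number of occurrences of $a_i$ in $w$. $\mathcal{W}^o_n$ is the set of words in $\mathcal{W}_n$ all of whose Lyndon factors have odd length and are pairwise distinct. $\mathcal{W}^e_n$ is the set of words in $\mathcal{W}_n$ all of whose Lyndon factors have even length, except possibly for one factor of length one. *)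

From mathcomp Require Import all_boot.
From mathcomp Require Import boolp.
Set Implicit Arguments. Unset Strict Implicit. Unset Printing Implicit Defensive.

(* Words over the alphabet A = {a_1 < ... < a_k}, encoded as 'I_k
   (letter a_{i+1} is the ordinal i), ordered by the natural order. *)
Definition word (k : nat) := seq 'I_k.

Fixpoint lexlt_nat (s t : seq nat) : bool :=
  match s, t with
  | [::], [::] => false
  | [::], _ :: _ => true
  | _ :: _, [::] => false
  | x :: s', y :: t' => (x < y) || ((x == y) && lexlt_nat s' t')
  end.

Definition lexlt k (u v : word k) : bool := lexlt_nat (map val u) (map val v).
Definition lexle k (u v : word k) : bool := (u == v) || lexlt u v.

Definition lyndon k (w : word k) : bool :=
  (w != [::]) && all (fun i => lexlt w (drop i w)) (iota 1 (size w).-1).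

Definition lyndon_factorization k (w : word k) (ls : seq (word k)) : Prop :=
  [/\ flatten ls = w, all (@lyndon k) ls & sorted (fun a b => lexle b a) ls].

Definition in_Wo k (w : word k) : Prop :=
  exists ls, lyndon_factorization w ls /\
    all (fun l => odd (size l)) ls /\ uniq ls.

Definition in_We k (w : word k) : Prop :=
  exists ls, lyndon_factorization w ls /\
    (count (fun l => odd (size l)) ls <= 1)%N /\
    all (fun l => odd (size l) ==> (size l == 1%N)) ls.

Definition has_weight k (alpha : seq nat) (w : word k) : Prop :=
  forall i : 'I_k, count_mem i w = nth 0%N alpha i.

(* Unique factorization into a nonincreasing product of Lyndon words
   identifies words with finite multisets of Lyndon words, which gives the
   Chen-Fox-Lyndon identity  prod_l (1 - x^l)^-1 = (1 - p1)^-1,  where l runs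
   over Lyndon words, x^l is the weight of l and p1 = x_1 + ... + x_k.
   Substituting x_i |-> -x_i multiplies x^l by (-1)^|l|, so
     prod_(|l| odd) (1 + x^l)^-1 * prod_(|l| even) (1 - x^l)^-1 = (1 + p1)^-1,
   that is,
     prod_(|l| odd) (1 + x^l) = (1 + p1) * prod_(|l| even) (1 - x^l)^-1.
   Through the same identification the left side counts W^o (distinct odd
   factors) and the right side counts W^e (an optional odd factor, which is
   then a letter, and even factors with repetition).  The series are handled
   as polynomials in {mpoly int[k]} compared in degrees <= n, where only Lyndon
   words of length <= n contribute. *)

From mathcomp Require Import all_boot all_order all_algebra mpoly ring zify.
From mathcomp Require Import boolp.
Set Implicit Arguments. Unset Strict Implicit. Unset Printing Implicit Defensive.
Import Order.TTheory GRing.Theory Num.Theory.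

Local Notation odd_size := (fun w : word _ => odd (size w)).

Lemma eq_cat_cases (T : Type) (a b c d : seq T) : a ++ b = c ++ d ->
  (exists x, c = a ++ x /\ b = x ++ d) \/ (exists x, a = c ++ x /\ d = x ++ b).
Proof.
elim: a c => [|y a IH] [|z c] /=.
- by move=> ->; left; exists [::].
- by move=> ->; left; exists (z :: c).
- by move=> <-; right; exists (y :: a).
by case=> <- /IH [[x [-> ->]]|[x [-> ->]]]; [left|right]; exists x.
Qed.

Lemma count_le1_uniq (T : eqType) (s : seq T) : (forall x, count_mem x s <= 1) -> uniq s.
Proof.
move=> le1; apply: count_mem_uniq => x; have := le1 x.
by rewrite -has_pred1 has_count; case: count => [|[]].
Qed.

Lemma filter_all_predC (T : Type) (a : pred T) s : all (predC a) s -> filter a s = [::].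
Proof. by elim: s => //= x s IH /andP[/negbTE -> /IH]. Qed.

Section SeqLexi.
Context {disp : Order.disp_t} (T : orderType disp).
Implicit Types s t : seq T.
Local Notation lex := (seqlexi T).

Lemma ltxi_cat2l s t1 t2 : (s ++ t1 < s ++ t2 :> lex)%O = (t1 < t2 :> lex)%O.
Proof. by elim: s => //= x s IH; rewrite eqhead_ltxiE. Qed.

Lemma lexi_prefix s t : (s <= s ++ t :> lex)%O.
Proof. by elim: s => //= x s IH; rewrite eqhead_lexiE. Qed.

Lemma ltxi_cases s1 s2 : (s1 < s2 :> lex)%O ->
  (exists t, s2 = s1 ++ t) \/ (forall t1 t2, (s1 ++ t1 < s2 ++ t2 :> lex)%O).
Proof.
elim: s1 s2 => [|x s1 IH] [|y s2] //=; first by left; exists (y :: s2).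
case: (ltgtP x y) => [xy _|yx|<-].
- by right=> t1 t2; rewrite neqhead_ltxiE ?(lt_eqF xy).
- by rewrite neqhead_ltxiE ?(gt_eqF yx) // ltNge (ltW yx).
rewrite eqhead_ltxiE => /IH [[t ->]|lt12]; first by left; exists t.
by right=> t1 t2; rewrite eqhead_ltxiE.
Qed.

Lemma ltxi_cat_size s1 s2 t1 t2 : (s1 < s2 :> lex)%O -> size s2 <= size s1 ->
  (s1 ++ t1 < s2 ++ t2 :> lex)%O.
Proof.
move=> lt12 le21; case: (ltxi_cases lt12) => [[t E]|->//].
move: lt12 le21; rewrite E size_cat -{2}[size s1]addn0 leq_add2l leqn0 size_eq0.
by move=> + /eqP t0; rewrite t0 cats0 ltxx.
Qed.

End SeqLexi.

Section Lyndon.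
Variable k : nat.
Implicit Types u v w l p s : word k.
Local Notation lex := (seqlexi 'I_k).
Local Open Scope order_scope.

Definition lexge : rel (word k) := fun u v => lexle v u.

Lemma lexltE u v : lexlt u v = (u < v :> lex).
Proof.
rewrite /lexlt; elim: u v => [|x u IH] [|y v] //=.
by rewrite IH ltxi_cons !leEord; case: ltngtP.
Qed.

Lemma lexleE u v : lexle u v = (u <= v :> lex).
Proof. by rewrite /lexle lexltE le_eqVlt. Qed.

Lemma lexge_trans : transitive lexge.
Proof. by move=> v u w; rewrite /lexge !lexleE => vu wv; apply: le_trans wv vu. Qed.

Lemma lexge_total : total lexge.
Proof. by move=> u v; rewrite /lexge !lexleE le_total. Qed.

Lemma lexge_anti : antisymmetric lexge.
Proof. by move=> u v; rewrite /lexge !lexleE => /le_anti. Qed.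

Lemma lyndonP w :
  reflect (w != [::] /\ forall i, (0 < i < size w)%N -> w < drop i w :> lex) (lyndon w).
Proof.
rewrite /lyndon; case: w => [|a w] /=; first by constructor; case.
apply: (iffP allP) => [lt_drop|[_ lt_drop] i]; first split=> // i.
  by move=> i_bound; rewrite -lexltE lt_drop // mem_iota add1n.
by rewrite mem_iota add1n lexltE; apply: lt_drop.
Qed.

Lemma lyndon_neq0 w : lyndon w -> w != [::].
Proof. by case/andP. Qed.

Lemma lyndon_lt_suffix p s : lyndon (p ++ s) -> p != [::] -> s != [::] ->
  p ++ s < s :> lex.
Proof.
case/lyndonP=> _ lt_drop p0 s0; have := lt_drop (size p); rewrite drop_size_cat //.
by apply; rewrite size_cat lt0n size_eq0 p0 -{1}[size p]addn0 ltn_add2l lt0n size_eq0.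
Qed.

Lemma lyndon_cat_lt u v : lyndon u -> lyndon v -> u < v :> lex -> u ++ v < v :> lex.
Proof.
move=> Lu Lv uv; case: (ltxi_cases uv) => [[r Er]|]; last first.
  by move/(_ v [::]); rewrite cats0.
have r0 : r != [::] by apply: contraTneq uv => r0; rewrite Er r0 cats0 ltxx.
rewrite {2}Er ltxi_cat2l {1}Er; apply: lyndon_lt_suffix => //; first by rewrite -Er.
exact: lyndon_neq0.
Qed.

Lemma lyndon_cat u v : lyndon u -> lyndon v -> u < v :> lex -> lyndon (u ++ v).
Proof.
move=> Lu Lv uv; apply/lyndonP; split=> [|i /andP[i0 i_size]].
  by case: u Lu {uv} => //; rewrite /lyndon.
rewrite drop_cat; case: (ltngtP i (size u)) => [iu|ui|->]; last first.
- by rewrite subnn drop0 lyndon_cat_lt.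
- apply: lt_trans (lyndon_cat_lt Lu Lv uv) _.
  by case/lyndonP: Lv => _; apply; rewrite size_cat in i_size; lia.
apply: ltxi_cat_size; last by rewrite size_drop leq_subr.
by case/lyndonP: Lu => _; apply; rewrite i0.
Qed.

Fixpoint lyndon_insert l (ls : seq (word k)) : seq (word k) :=
  if ls is h :: t then
    if l < h :> lex then lyndon_insert (l ++ h) t else l :: h :: t
  else [:: l].

Definition lfactors w : seq (word k) := foldr (fun a => lyndon_insert [:: a]) [::] w.

Lemma lyndon_insertP l ls : lyndon l -> lyndon_factorization (flatten ls) ls ->
  lyndon_factorization (l ++ flatten ls) (lyndon_insert l ls).
Proof.
elim: ls l => [|h t IH] l Ll [_ A S]; first by split; rewrite /= ?cats0 ?Ll.
case/andP: A => Lh Lt /=; case: ifP => lh.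
  by rewrite catA; apply: IH; [exact: lyndon_cat | split=> //; exact: path_sorted S].
by split=> //=; rewrite ?Ll ?Lh ?Lt // lexleE leNgt lh.
Qed.

Lemma lfactorsP w : lyndon_factorization w (lfactors w).
Proof.
elim: w => [|a w [Fw Aw Sw]] //.
have := @lyndon_insertP [:: a] (lfactors w) isT; rewrite Fw; apply.
by split; rewrite ?Fw.
Qed.

Lemma prefix_flatten_le l rest q r : all (fun x => lexle x l) rest ->
  q ++ r = flatten rest -> q != [::] ->
  exists z v, [/\ q = z ++ v, v != [::] & v <= l :> lex].
Proof.
elim: rest q => [|l2 rest IH] q /=; first by case: q.
case/andP=> /[!lexleE] l2l rest_le E q0.
case: (eq_cat_cases E) => [[x [El2 _]]|[x [Eq Ef]]].
  by exists [::], q; split=> //; apply: le_trans l2l; rewrite El2 lexi_prefix.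
have [x0|x0] := eqVneq x [::].
  by exists [::], q; split=> //; rewrite Eq x0 cats0.
have [z [v [Ex v0 vl]]] := IH x rest_le (esym Ef) x0.
by exists (l2 ++ z), v; rewrite Eq Ex catA.
Qed.

Lemma lyndon_prefix_size l rest p s : lyndon l -> all (fun x => lexle x l) rest ->
  lyndon p -> p ++ s = l ++ flatten rest -> (size p <= size l)%N.
Proof.
move=> Ll rest_le Lp E; rewrite leqNgt; apply/negP => lt_lp.
case: (eq_cat_cases E) => [[x [Ex _]]|[x [Ep Ef]]].
  by move: lt_lp; rewrite Ex size_cat; lia.
have x0 : x != [::] by apply: contraTneq lt_lp => x0; rewrite Ep x0 cats0 ltnn.
have [z [v [Ex v0 vl]]] := prefix_flatten_le rest_le (esym Ef) x0.
have pv : p < v :> lex.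
  rewrite Ep Ex catA; apply: lyndon_lt_suffix => //; first by rewrite -catA -Ex -Ep.
  by rewrite -size_eq0 size_cat addn_eq0 size_eq0 (negbTE (lyndon_neq0 Ll)).
have lp : l <= p :> lex by rewrite Ep lexi_prefix.
by have := lt_le_trans (lt_le_trans pv vl) lp; rewrite ltxx.
Qed.

Lemma lyndon_factorization_uniq w ls1 ls2 :
  lyndon_factorization w ls1 -> lyndon_factorization w ls2 -> ls1 = ls2.
Proof.
elim: ls1 ls2 w => [|l1 r1 IH] [|l2 r2] w [<- A1 S1] [E A2 S2] //.
- by case/andP: A2 E S2 => /lyndon_neq0; case: l2.
- by case/andP: A1 E S1 => /lyndon_neq0; case: l1.
have {A1}[L1 A1] : lyndon l1 /\ all (@lyndon k) r1 by apply/andP.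
have {A2}[L2 A2] : lyndon l2 /\ all (@lyndon k) r2 by apply/andP.
have {}E : l2 ++ flatten r2 = l1 ++ flatten r1 := E.
have le21 := lyndon_prefix_size L1 (order_path_min lexge_trans S1) L2 E.
have le12 := lyndon_prefix_size L2 (order_path_min lexge_trans S2) L1 (esym E).
have size_eq : size l2 = size l1 by apply/eqP; rewrite eqn_leq le21 le12.
move/eqP: E; rewrite eqseq_cat // => /andP[/eqP El /eqP E]; rewrite El in S2 *.
have F1 : lyndon_factorization (flatten r1) r1.
  by split; [by [] | exact: A1 | exact: path_sorted S1].
have F2 : lyndon_factorization (flatten r1) r2.
  by split; [exact: E | exact: A2 | exact: path_sorted S2].
by rewrite (IH _ _ F1 F2).
Qed.

Lemma lyndon_factorizationE w ls : lyndon_factorization w ls -> ls = lfactors w.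
Proof. by move/lyndon_factorization_uniq; apply; exact: lfactorsP. Qed.

Lemma lfactors_sort ms : all (@lyndon k) ms ->
  lfactors (flatten (sort lexge ms)) = sort lexge ms.
Proof.
move=> Ams; apply/esym/lyndon_factorizationE.
by split; [| rewrite all_sort | exact: sort_sorted lexge_total ms].
Qed.

Lemma lfactors_perm_inj w1 w2 : perm_eq (lfactors w1) (lfactors w2) -> w1 = w2.
Proof.
have [F1 _ S1] := lfactorsP w1; have [F2 _ S2] := lfactorsP w2.
move/(perm_sortP lexge_total lexge_trans lexge_anti).
rewrite (sorted_sort lexge_trans S1) (sorted_sort lexge_trans S2).
by rewrite -{2}F1 -{2}F2 => ->.
Qed.

End Lyndon.

Section FactorClasses.
Variable k : nat.
Implicit Types (w : word k) (ls : seq (word k)).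

Definition Wo_factors ls := all odd_size ls && uniq ls.

Definition We_factors ls :=
  (count odd_size ls <= 1) && all (fun l => odd (size l) ==> (size l == 1)) ls.

Lemma in_WoE w : in_Wo w <-> Wo_factors (lfactors w).
Proof.
split=> [[ls [F [odd_ls uniq_ls]]]|/andP[odd_ls uniq_ls]].
  by rewrite -(lyndon_factorizationE F) /Wo_factors odd_ls.
by exists (lfactors w); split; [exact: lfactorsP | split].
Qed.

Lemma in_WeE w : in_We w <-> We_factors (lfactors w).
Proof.
split=> [[ls [F [count_ls size_ls]]]|/andP[count_ls size_ls]].
  by rewrite -(lyndon_factorizationE F) /We_factors count_ls.
by exists (lfactors w); split; [exact: lfactorsP | split].
Qed.

End FactorClasses.

Section Weight.
Variable k : nat.
Implicit Types (u v w l : word k) (ls : seq (word k)).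

Definition wt w : 'X_{1..k} := [multinom count_mem a w | a < k].

Lemma wtE w a : wt w a = count_mem a w.
Proof. exact: mnmE. Qed.

Lemma wt_cat u v : wt (u ++ v) = (wt u + wt v)%MM.
Proof. by apply/mnmP => a; rewrite mnmDE !wtE count_cat. Qed.

Lemma wt_nil : wt [::] = 0%MM.
Proof. by apply/mnmP => a; rewrite !mnmE. Qed.

Lemma wt_flatten ls : wt (flatten ls) = (\sum_(l <- ls) wt l)%MM.
Proof. by elim: ls => [|l ls IH]; rewrite ?big_nil ?wt_nil // big_cons wt_cat IH. Qed.

Lemma wt_flatten_perm ls1 ls2 : perm_eq ls1 ls2 -> wt (flatten ls1) = wt (flatten ls2).
Proof. by move=> P; rewrite !wt_flatten (perm_big _ P). Qed.

Lemma wt_seq1 (a : 'I_k) : wt [:: a] = U_(a)%MM.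
Proof. by apply/mnmP => i; rewrite wtE mnmE /= addn0 eq_sym. Qed.

Lemma mdeg_wt w : mdeg (wt w) = size w.
Proof.
elim: w => [|a w IH]; first by rewrite wt_nil mdeg0.
by rewrite -cat1s wt_cat mdegD wt_seq1 mdeg1 IH.
Qed.

Lemma card_lfactors (X : finType) (A : pred X) (enc : seq (word k) -> X)
    (dec : X -> seq (word k)) (Q : pred (seq (word k))) beta d :
  mdeg beta = d ->
  (forall ls1 ls2, perm_eq ls1 ls2 -> enc ls1 = enc ls2) ->
  (forall ls1 ls2, perm_eq ls1 ls2 -> Q ls1 = Q ls2) ->
  (forall x, A x -> [/\ enc (dec x) = x, all (@lyndon k) (dec x), Q (dec x)
                      & wt (flatten (dec x)) = beta]) ->
  (forall ls, all (@lyndon k) ls -> Q ls -> wt (flatten ls) = beta ->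
              A (enc ls) /\ perm_eq ls (dec (enc ls))) ->
  #|A| = #|[set t : d.-tuple 'I_k | Q (lfactors t) && (wt t == beta)]|.
Proof.
move=> d_beta enc_perm Q_perm decK encK; set S := [set t | _].
pose psi (t : d.-tuple 'I_k) := enc (lfactors t).
have S_enc t : t \in S -> A (psi t) /\ perm_eq (lfactors t) (dec (psi t)).
  rewrite inE => /andP[Qt /eqP wt_t]; have [F Al _] := lfactorsP t.
  by apply: encK; rewrite ?F.
have psi_inj : {in S &, injective psi}.
  move=> t1 t2 /S_enc[_ P1] /S_enc[_ P2] E; apply/val_inj/lfactors_perm_inj.
  by rewrite (perm_trans P1) // E perm_sym.
rewrite -(card_in_imset psi_inj); apply: eq_card => x.
apply/idP/imsetP => [Ax|[t /S_enc[Ax _] ->//]].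
have [decxK dec_lyndon Q_dec wt_dec] := decK x Ax.
set ms := sort (@lexge k) (dec x).
have Pms : perm_eq ms (dec x) by rewrite perm_sort.
have ms_fact : lfactors (flatten ms) = ms by rewrite lfactors_sort.
have wt_ms : wt (flatten ms) = beta by rewrite (wt_flatten_perm Pms).
have size_ms : size (flatten ms) == d by rewrite -mdeg_wt wt_ms d_beta.
exists (Tuple size_ms); last by rewrite /psi /= ms_fact (enc_perm _ _ Pms) decxK.
by rewrite inE /= ms_fact (Q_perm _ _ Pms) Q_dec wt_ms eqxx.
Qed.

End Weight.

Section LyndonMultisets.
Variables k n : nat.
Implicit Types (w x : word k) (ls : seq (word k)).

Definition short_lyndons : seq (word k) :=
  undup [seq w <- flatten [seq map val (enum {: j.-tuple 'I_k}) | j <- iota 0 n.+1]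
          | lyndon w].

Lemma mem_short_lyndons w : (w \in short_lyndons) = lyndon w && (size w <= n).
Proof.
rewrite mem_undup mem_filter; congr (_ && _); apply/flatten_mapP/idP => [[j]|wn].
  by rewrite mem_iota ltnS => /andP[_ jn] /mapP[t _ ->]; rewrite size_tuple.
exists (size w); first by rewrite mem_iota ltnS.
by apply/mapP; exists (Tuple (eqxx (size w))); rewrite ?mem_enum.
Qed.

Local Notation L := (seq_sub short_lyndons).
Implicit Types l : L.

Lemma lyndon_short l : lyndon (val l).
Proof. by have := valP l; rewrite mem_short_lyndons => /andP[]. Qed.

Lemma size_flatten_lyndon ls : all (@lyndon k) ls -> size ls <= size (flatten ls).
Proof.
elim: ls => //= w ls IH /andP[/lyndon_neq0 w0 /IH]; rewrite size_cat -add1n.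
by apply: leq_add; rewrite lt0n size_eq0.
Qed.

Lemma short_lyndon_seq ls : all (@lyndon k) ls -> size (flatten ls) <= n ->
  all (mem short_lyndons) ls /\ forall x, count_mem x ls <= n.
Proof.
move=> lyn_ls size_ls; split=> [|x].
  apply/allP => w w_ls; rewrite /= mem_short_lyndons (allP lyn_ls) //=.
  case/splitPr: w_ls size_ls => ls1 ls2; rewrite flatten_cat /= !size_cat addnCA.
  exact: leq_trans (leq_addr _ _).
exact: leq_trans (count_size _ _) (leq_trans (size_flatten_lyndon lyn_ls) size_ls).
Qed.

Definition expand N (f : {ffun L -> 'I_N}) : seq (word k) :=
  \big[cat/[::]]_l nseq (f l) (val l).

(* Counts above N are not faithful: [inord] sends them to 0. *)
Definition mult N ls : {ffun L -> 'I_N.+1} := [ffun l => inord (count_mem (val l) ls)].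

Definition wsum N (f : {ffun L -> 'I_N}) : 'X_{1..k} := (\sum_l wt (val l) *+ f l)%MM.

Definition supp_in N (P : pred (word k)) (f : {ffun L -> 'I_N}) :=
  [forall l, (f l == 0 :> nat) || P (val l)].

Lemma count_expand N (f : {ffun L -> 'I_N}) x :
  count_mem x (expand f) = \sum_(l | val l == x) f l.
Proof.
rewrite (big_morph _ (count_cat _) (erefl : count_mem x [::] = 0)) [RHS]big_mkcond.
by apply: eq_bigr => l _; rewrite count_nseq /=; case: eqP; rewrite ?mul1n.
Qed.

Lemma count_expand_val N (f : {ffun L -> 'I_N}) l : count_mem (val l) (expand f) = f l.
Proof. by rewrite count_expand (big_pred1 l) // => l'; rewrite val_eqE. Qed.

Lemma count_expand_out N (f : {ffun L -> 'I_N}) x :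
  x \notin short_lyndons -> count_mem x (expand f) = 0.
Proof.
move=> x_out; rewrite count_expand big_pred0 // => l.
by apply: contraNF x_out => /eqP <-; exact: valP.
Qed.

Lemma count_expand_lt N (f : {ffun L -> 'I_N}) x : x \in short_lyndons ->
  count_mem x (expand f) < N.
Proof. by move=> x_short; rewrite -[x]/(val (Sub x x_short : L)) count_expand_val. Qed.

Lemma mem_expand N (f : {ffun L -> 'I_N}) x :
  (x \in expand f) = [exists l, (val l == x) && (0 < f l)].
Proof.
rewrite -has_pred1 has_count count_expand lt0n sum_nat_eq0 negb_forall.
by apply: eq_existsb => l; rewrite negb_imply lt0n.
Qed.

Lemma all_expand N P (f : {ffun L -> 'I_N}) : supp_in P f -> all P (expand f).
Proof.
move=> /forallP f_supp; apply/allP => x.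
by rewrite mem_expand => /existsP[l /andP[/eqP <- fl]]; have := f_supp l; rewrite eqn0Ngt fl.
Qed.

Lemma lyndon_expand N (f : {ffun L -> 'I_N}) : all (@lyndon k) (expand f).
Proof.
apply/allP => x; rewrite mem_expand => /existsP[l /andP[/eqP <- _]].
exact: lyndon_short.
Qed.

Lemma wt_expand N (f : {ffun L -> 'I_N}) : wt (flatten (expand f)) = wsum f.
Proof.
rewrite (big_morph _ (@flatten_cat _) (erefl : flatten [::] = [::])).
rewrite (big_morph _ (@wt_cat k) (@wt_nil k)).
apply: eq_bigr => l _; rewrite wt_flatten big_nseq.
by elim: (nat_of_ord (f l)) => [|j /= ->]; rewrite ?mulm0n ?mulmS.
Qed.

Lemma mult_expand N (f : {ffun L -> 'I_N.+1}) : mult N (expand f) = f.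
Proof. by apply/ffunP => l; rewrite ffunE count_expand_val inord_val. Qed.

Lemma mult_perm N ls1 ls2 : perm_eq ls1 ls2 -> mult N ls1 = mult N ls2.
Proof. by move/permP => E; apply/ffunP => l; rewrite !ffunE E. Qed.

Lemma supp_in_mult N P ls : all P ls -> supp_in P (mult N ls).
Proof.
move=> /allP P_ls; apply/forallP => l; rewrite ffunE.
have [l_ls|l_ls] := boolP (val l \in ls); first by rewrite P_ls ?orbT.
by rewrite (count_memPn l_ls) inordK.
Qed.

Lemma perm_expand_mult N ls : all (mem short_lyndons) ls ->
  (forall x, count_mem x ls <= N) -> perm_eq ls (expand (mult N ls)).
Proof.
move=> /allP ls_short count_le; apply/allP => x _; apply/eqP.
have [x_short|x_out] := boolP (x \in short_lyndons).
  by rewrite -[x]/(val (Sub x x_short : L)) count_expand_val ffunE inordK ?ltnS.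
rewrite count_expand_out //; apply/count_memPn; apply: contra x_out; exact: ls_short.
Qed.

End LyndonMultisets.

Section EvenEncoding.
Variables k n : nat.
Implicit Types (ls : seq (word k)) (o : option 'I_k).
Local Notation L := (seq_sub (short_lyndons k n)).

Definition optletter o : seq (word k) := if o is Some a then [:: [:: a]] else [::].

Definition odd_letter ls : option 'I_k := if ls is [:: [:: a]] then Some a else None.

Lemma odd_letterK o : odd_letter (optletter o) = o.
Proof. by case: o. Qed.

Lemma optletterK ls : size ls <= 1 -> all (fun l => size l == 1) ls ->
  optletter (odd_letter ls) = ls.
Proof. by case: ls => [|[|a [|? ?]] [|? ?]]. Qed.

Lemma odd_letter_perm ls1 ls2 : perm_eq ls1 ls2 -> odd_letter ls1 = odd_letter ls2.
Proof.
move=> P; have := perm_size P; case: ls1 ls2 P => [|l1 [|? ?]] [|l2 [|? ?]] //= P _.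
  by have := perm_mem P l1; rewrite !inE eqxx => /esym/eqP ->.
by case: l1 {P} => [|? [|? ?]]; case: l2 => [|? [|? ?]].
Qed.

Lemma lyndon_optletter o : all (@lyndon k) (optletter o).
Proof. by case: o. Qed.

Lemma odd_optletter o : all odd_size (optletter o).
Proof. by case: o. Qed.

(* The factors of a word of W^e: its odd factor, a letter if any, and the
   multiplicities of its even factors. *)
Definition We_enc ls : option 'I_k * {ffun L -> 'I_n.+1} :=
  (odd_letter (filter odd_size ls), mult n n (filter (predC odd_size) ls)).

Definition We_dec (x : option 'I_k * {ffun L -> 'I_n.+1}) : seq (word k) :=
  optletter x.1 ++ expand x.2.

Lemma We_enc_perm ls1 ls2 : perm_eq ls1 ls2 -> We_enc ls1 = We_enc ls2.
Proof.
move=> P; rewrite /We_enc (odd_letter_perm (perm_filter _ P)).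
by rewrite (@mult_perm k n n _ _ (perm_filter _ P)).
Qed.

Lemma We_decK o f : supp_in (predC odd_size) f -> We_enc (We_dec (o, f)) = (o, f).
Proof.
move=> /all_expand even_f; rewrite /We_enc /We_dec /= !filter_cat.
rewrite (filter_all_predC even_f) (all_filterP (odd_optletter o)) (all_filterP even_f).
by rewrite filter_all_predC ?cats0 ?odd_letterK ?mult_expand //; case: o.
Qed.

Lemma We_factors_dec o f : supp_in (predC odd_size) f -> We_factors (We_dec (o, f)).
Proof.
move=> /all_expand even_f; rewrite /We_factors /We_dec /= count_cat all_cat.
rewrite -[count _ (expand f)]size_filter (filter_all_predC even_f) addn0.
rewrite (sub_all _ even_f) ?andbT => [|l /negbTE ->//].
by case: o.
Qed.

Lemma perm_We_enc ls : We_factors ls -> all (mem (short_lyndons k n)) ls ->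
  (forall x, count_mem x ls <= n) -> perm_eq ls (We_dec (We_enc ls)).
Proof.
move=> /andP[count_odd odd_letters] short count_le.
have split_ls := permEl (perm_filterC odd_size ls).
set so := filter odd_size ls in split_ls *; set se := filter _ ls in split_ls *.
have so_letters : optletter (odd_letter so) = so.
  apply: optletterK; first by rewrite size_filter.
  by apply/allP => l; rewrite mem_filter => /andP[l_odd /(allP odd_letters)]; rewrite l_odd.
have se_short : all (mem (short_lyndons k n)) se.
  by apply/allP => l; rewrite mem_filter => /andP[_ /(allP short)].
have se_count x : count_mem x se <= n.
  by apply: leq_trans (count_le x); rewrite -(permP split_ls) count_cat leq_addl.
rewrite /We_dec /= so_letters perm_sym (perm_trans _ split_ls) // perm_cat2l perm_sym.
exact: perm_expand_mult.
Qed.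

End EvenEncoding.

Section Counts.
Variables (k n d : nat) (beta : 'X_{1..k}).
Hypotheses (d_beta : mdeg beta = d) (d_le_n : d <= n).
Local Notation L := (seq_sub (short_lyndons k n)).

Lemma short_factors ls : all (@lyndon k) ls -> wt (flatten ls) = beta ->
  all (mem (short_lyndons k n)) ls /\ forall x, count_mem x ls <= n.
Proof. by move=> lyn_ls wt_ls; apply: short_lyndon_seq; rewrite // -mdeg_wt wt_ls d_beta. Qed.

Lemma card_words :
  #|[pred f : {ffun L -> 'I_n.+1} | wsum f == beta]| =
  #|[set t : d.-tuple 'I_k | wt t == beta]|.
Proof.
rewrite (card_lfactors (enc := mult n n) (dec := @expand k n _) (Q := predT) d_beta).
- by apply: eq_card => t; rewrite !inE.
- exact: mult_perm.
- by [].
- by move=> f /eqP wt_f; split; rewrite ?mult_expand ?lyndon_expand ?wt_expand.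
move=> ls lyn_ls _ wt_ls; have [short count_le] := short_factors lyn_ls wt_ls.
have P := perm_expand_mult short count_le.
by split; rewrite //= -wt_expand -(wt_flatten_perm P) wt_ls.
Qed.

Lemma card_Wo :
  #|[pred f : {ffun L -> 'I_2} | supp_in odd_size f && (wsum f == beta)]| =
  #|[set t : d.-tuple 'I_k | Wo_factors (lfactors t) && (wt t == beta)]|.
Proof.
rewrite (card_lfactors (enc := mult n 1) (dec := @expand k n _) (Q := @Wo_factors k) d_beta) //.
- exact: mult_perm.
- by move=> ls1 ls2 P; rewrite /Wo_factors (perm_all _ P) (perm_uniq P).
- move=> f /andP[f_odd /eqP wt_f]; split; rewrite ?mult_expand ?lyndon_expand ?wt_expand //.
  rewrite /Wo_factors all_expand //=; apply: count_le1_uniq => x.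
  have [x_short|x_out] := boolP (x \in short_lyndons k n); first by rewrite -ltnS count_expand_lt.
  by rewrite count_expand_out.
move=> ls lyn_ls /andP[ls_odd ls_uniq] wt_ls; have [short _] := short_factors lyn_ls wt_ls.
have count_le x : count_mem x ls <= 1 by rewrite count_uniq_mem ?leq_b1.
have P := perm_expand_mult short count_le.
by split; rewrite //= supp_in_mult //= -wt_expand -(wt_flatten_perm P) wt_ls.
Qed.

Lemma card_We :
  #|[pred x : option 'I_k * {ffun L -> 'I_n.+1} |
     supp_in (predC odd_size) x.2 &&
     ((wt (flatten (optletter x.1)) + wsum x.2)%MM == beta)]| =
  #|[set t : d.-tuple 'I_k | We_factors (lfactors t) && (wt t == beta)]|.
Proof.
rewrite (card_lfactors (enc := @We_enc k n) (dec := @We_dec k n) (Q := @We_factors k) d_beta) //.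
- exact: We_enc_perm.
- by move=> ls1 ls2 P; rewrite /We_factors (perm_all _ P) (permP P).
- case=> o f /andP[/= f_even /eqP wt_x]; split.
  + exact: We_decK.
  + by rewrite all_cat lyndon_optletter lyndon_expand.
  + exact: We_factors_dec.
  by rewrite /We_dec flatten_cat wt_cat wt_expand.
move=> ls lyn_ls We_ls wt_ls; have [short count_le] := short_factors lyn_ls wt_ls.
have P := perm_We_enc We_ls short count_le.
split=> //; rewrite /= supp_in_mult ?filter_all //= -wt_expand -wt_cat -flatten_cat.
by rewrite -wt_ls (wt_flatten_perm P).
Qed.

End Counts.

Section TruncatedSeries.
Local Open Scope ring_scope.
Variables (R : comNzRingType) (k n : nat).
Local Notation P := {mpoly R[k]}.
Implicit Types p q r z : P.

Definition eq_upto p q := forall m : 'X_{1..k}, (mdeg m <= n)%N -> p@_m = q@_m.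

Lemma eq_upto_sym p q : eq_upto p q -> eq_upto q p.
Proof. by move=> pq m /pq. Qed.

Lemma eq_upto_trans p q r : eq_upto p q -> eq_upto q r -> eq_upto p r.
Proof. by move=> pq qr m m_n; rewrite pq // qr. Qed.

Lemma eq_uptoMr p q r : eq_upto p q -> eq_upto (p * r) (q * r).
Proof.
move=> pq m m_n; rewrite !mcoeffM; apply: eq_bigr => mm /eqP m_def.
rewrite pq // (leq_trans _ m_n) // (leq_trans (leq_addr (mdeg mm.2) _)) //.
by rewrite -mdegD -m_def.
Qed.

Lemma eq_uptoMl p q r : eq_upto p q -> eq_upto (r * p) (r * q).
Proof. by rewrite ![r * _]mulrC; apply: eq_uptoMr. Qed.

Lemma eq_upto_prod (I : Type) (s : seq I) (F G : I -> P) :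
  (forall i, eq_upto (F i) (G i)) -> eq_upto (\prod_(i <- s) F i) (\prod_(i <- s) G i).
Proof.
move=> FG; elim: s => [|i s IH]; first by rewrite !big_nil.
by rewrite !big_cons; apply: eq_upto_trans (eq_uptoMr _ (FG i)) (eq_uptoMl _ IH).
Qed.

Lemma eq_upto_prodM1 (I : Type) (s : seq I) (F G : I -> P) :
  (forall i, eq_upto (F i * G i) 1) -> eq_upto (\prod_(i <- s) F i * \prod_(i <- s) G i) 1.
Proof. by move/(eq_upto_prod s); rewrite big_split big1_eq. Qed.

Lemma eq_upto_geometric z d : (0 < d)%N -> z \is d.-homog ->
  eq_upto ((1 - z) * \sum_(j < n.+1) z ^+ j) 1.
Proof.
move=> d_gt0 z_homog m m_n.
have -> : (1 - z) * \sum_(j < n.+1) z ^+ j = 1 - z ^+ n.+1.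
  by rewrite -[1 - z]opprB mulNr -subrX1 opprB.
rewrite mcoeffB (dhomog_nemf_coeff (dhomogMn n.+1 z_homog)) ?subr0 //.
by apply: contraTneq m_n => ->; rewrite -ltnNge (leq_pmull _ d_gt0).
Qed.

End TruncatedSeries.

Section MonomialSums.
Local Open Scope ring_scope.
Variables (R : comNzRingType) (k : nat).
Local Notation P := {mpoly R[k]}.

Lemma mcoeff_sumX (T : finType) (c : T -> R) (g : T -> 'X_{1..k}) m :
  (\sum_x c x *: ('X_[g x] : P))@_m = \sum_(x | g x == m) c x.
Proof.
rewrite raddf_sum [RHS]big_mkcond /=; apply: eq_bigr => x _.
by rewrite mcoeffZ mcoeffX; case: eqP; rewrite ?mulr1 ?mulr0.
Qed.

Lemma prod_sumX (I T : finType) (c : I -> T -> R) (g : I -> T -> 'X_{1..k}) :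
  \prod_i \sum_j c i j *: ('X_[g i j] : P) =
  \sum_(f : {ffun I -> T}) (\prod_i c i (f i)) *: 'X_[(\sum_i g i (f i))%MM].
Proof.
rewrite bigA_distr_bigA; apply: eq_bigr => f _.
rewrite scaler_prod; congr (_ *: _).
by elim/big_rec2: _ => [|i p m _ ->]; rewrite ?mpolyX0 ?mpolyXD.
Qed.

Lemma mcoeff_sum_boolX (T : finType) (b : pred T) (g : T -> 'X_{1..k}) m :
  (\sum_x (b x)%:R *: ('X_[g x] : P))@_m = #|[pred x | b x && (g x == m)]|%:R.
Proof.
rewrite mcoeff_sumX -sum1_card natr_sum big_mkcond [RHS]big_mkcond /=.
by apply: eq_bigr => x _; rewrite inE; case: (g x == m); case: (b x).
Qed.

Lemma prod_boolr (I : finType) (b : pred I) :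
  \prod_i ((b i)%:R : R) = [forall i, b i]%:R.
Proof.
have [/forallP b_all|] := boolP [forall i, b i]; first by rewrite big1 // => i _; rewrite b_all.
by rewrite negb_forall => /existsP[i /negbTE bi]; rewrite (bigD1 i) //= bi mul0r.
Qed.

Lemma prod_sum_boolX (I T : finType) (b : I -> T -> bool) (g : I -> T -> 'X_{1..k}) :
  \prod_i \sum_j (b i j)%:R *: ('X_[g i j] : P) =
  \sum_(f : {ffun I -> T}) [forall i, b i (f i)]%:R *: 'X_[(\sum_i g i (f i))%MM].
Proof. by rewrite prod_sumX; under eq_bigr do rewrite prod_boolr. Qed.

End MonomialSums.

Section LyndonSeries.
Local Open Scope ring_scope.
Variables k n : nat.
Local Notation L := (seq_sub (short_lyndons k n)).
Local Notation P := {mpoly int[k]}.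
Implicit Types l : L.

Definition letters : P := \sum_(a : 'I_k) 'X_[wt [:: a]].

Definition sgn l : int := (-1) ^+ size (val l).

Definition signed_geo l : P := \sum_(j < n.+1) (sgn l *: 'X_[wt (val l)]) ^+ j.

Definition odd_part l : P :=
  \sum_(j < 2) ((j == 0 :> nat) || odd (size (val l)))%:R *: 'X_[wt (val l) *+ j].

Definition even_part l : P :=
  \sum_(j < n.+1) ((j == 0 :> nat) || ~~ odd (size (val l)))%:R *: 'X_[wt (val l) *+ j].

Definition even_part_inv l : P := if odd (size (val l)) then 1 else 1 - 'X_[wt (val l)].

Lemma letters_homog : letters \is 1.-homog.
Proof. by apply: rpred_sum => a _; rewrite dhomogX wt_seq1; apply/eqP/mdeg1. Qed.

Lemma mdeg_wt_short_gt0 l : (0 < mdeg (wt (val l)))%N.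
Proof. by rewrite mdeg_wt lt0n size_eq0 lyndon_neq0 ?lyndon_short. Qed.

Lemma coef_letters_exp d m : (letters ^+ d)@_m = #|[set t : d.-tuple 'I_k | wt t == m]|%:R.
Proof.
have -> : letters ^+ d = \prod_(i < d) \sum_(a : 'I_k) true%:R *: 'X_[wt [:: a]].
  by rewrite prodr_const card_ord; under eq_bigr do rewrite scale1r.
rewrite prod_sum_boolX mcoeff_sum_boolX; congr (_%:R).
have wt_tuple (t : d.-tuple 'I_k) : wt t = (\sum_(i < d) wt [:: tnth t i])%MM.
  by rewrite -{1}(flatten_seq1 t) wt_flatten big_map big_tuple.
rewrite -(card_imset _ (can_inj (@finfun_of_tupleK _ _))); apply: eq_card => f.
rewrite inE; apply/idP/imsetP => [f_m|[t]]; last first.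
  rewrite inE wt_tuple => /eqP <- ->; apply/andP; split; first exact/forallP.
  by apply/eqP/eq_bigr => i _; rewrite ffunE.
exists (tuple_of_finfun f); last by rewrite tuple_of_finfunK.
case/andP: f_m => _ f_m; rewrite inE wt_tuple.
by under eq_bigr do rewrite tnth_mktuple.
Qed.

Lemma chen_fox_lyndon_signed :
  eq_upto n (\prod_l signed_geo l) (\sum_(j < n.+1) (- letters) ^+ j).
Proof.
move=> m m_n; rewrite /signed_geo.
under eq_bigr do under eq_bigr do rewrite exprZn mpolyXn.
rewrite prod_sumX mcoeff_sumX (eq_bigr (fun _ => (-1) ^+ mdeg m)); last first.
  move=> f /eqP <-; rewrite /sgn; under eq_bigr do rewrite -exprM.
  rewrite prodrXr mdeg_sum; congr (_ ^+ _); apply: eq_bigr => l _.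
  by rewrite mdegMn mdeg_wt.
rewrite sumr_const raddf_sum (bigD1 (Ordinal (m_n : (mdeg m < n.+1)%N))) //=.
rewrite big1 ?addr0 => [|j j_m]; last first.
  rewrite -scaleN1r exprZn mcoeffZ (dhomog_nemf_coeff (dhomogMn j letters_homog)) ?mulr0 //.
  by rewrite mul1n; apply: contraNneq j_m => m_j; apply/eqP/val_inj.
rewrite -scaleN1r exprZn mcoeffZ coef_letters_exp mulr_natr; congr (_ *+ _).
by rewrite -(card_words (erefl (mdeg m)) m_n); apply: eq_card => f; rewrite inE.
Qed.

Lemma letters_inv : eq_upto n ((1 + letters) * \sum_(j < n.+1) (- letters) ^+ j) 1.
Proof.
have := eq_upto_geometric (n := n) (ltn0Sn 0) (rpredNr letters_homog).
by rewrite opprK.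
Qed.

Lemma signed_geo_inv l : eq_upto n ((1 - sgn l *: 'X_[wt (val l)]) * signed_geo l) 1.
Proof.
apply: (eq_upto_geometric (mdeg_wt_short_gt0 l)).
by rewrite rpredZ // dhomogX.
Qed.

Lemma odd_part_mul l : odd_part l * even_part_inv l = 1 - sgn l *: 'X_[wt (val l)].
Proof.
rewrite /odd_part /even_part_inv /sgn big_ord_recr big_ord1 /= mulm0n mulm1n mpolyX0.
rewrite -signr_odd; case: odd => /=; rewrite ?scale1r ?scale0r ?mulr1 ?addr0 ?mul1r //.
by rewrite expr1 scaleN1r opprK.
Qed.

Lemma even_part_inv_mul l : eq_upto n (even_part_inv l * even_part l) 1.
Proof.
rewrite /even_part_inv /even_part; case: ifP => _.
  by rewrite mul1r big_ord_recl /= mulm0n mpolyX0 scale1r big1 ?addr0 // => j _; rewrite scale0r.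
under eq_bigr do rewrite orbT scale1r -mpolyXn.
apply: (eq_upto_geometric (mdeg_wt_short_gt0 l)).
by rewrite dhomogX.
Qed.

Lemma one_plus_letters : 1 + letters = \sum_(o : option 'I_k) 'X_[wt (flatten (optletter o))].
Proof.
rewrite (bigD1 None) //= wt_nil mpolyX0; congr (_ + _).
rewrite (reindex_omap Some id) //=; last by case.
by apply: eq_bigl => a; rewrite eqxx.
Qed.

Lemma odd_even_parts :
  eq_upto n (\prod_l odd_part l) ((1 + letters) * \prod_l even_part l).
Proof.
set O := \prod_l odd_part l; set E := \prod_l even_part l.
set D := \prod_l even_part_inv l; set G := \prod_l signed_geo l.
set S := \prod_l (1 - sgn l *: 'X_[wt (val l)]).
have DE : eq_upto n (D * E) 1 by apply: eq_upto_prodM1; exact: even_part_inv_mul.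
have OD : O * D = S by rewrite -big_split; apply: eq_bigr => l _; exact: odd_part_mul.
have SG : eq_upto n (S * G) 1 by apply: eq_upto_prodM1; exact: signed_geo_inv.
have PG : eq_upto n ((1 + letters) * G) 1.
  exact: eq_upto_trans (eq_uptoMl _ chen_fox_lyndon_signed) letters_inv.
(* S and 1 + letters are both inverse to G, so O = O D E = S E ~ (1 + letters) E. *)
have O_SE : eq_upto n O (S * E).
  by rewrite -OD -mulrA; apply: eq_upto_sym; have := eq_uptoMl O DE; rewrite mulr1.
have SE_PE : eq_upto n (S * E) ((1 + letters) * E).
  have := eq_uptoMl (S * E) (eq_upto_sym PG); rewrite mulr1 => /eq_upto_trans; apply.
  have -> : S * E * ((1 + letters) * G) = S * G * ((1 + letters) * E) by ring.
  by have := eq_uptoMr ((1 + letters) * E) SG; rewrite mul1r.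
exact: eq_upto_trans O_SE SE_PE.
Qed.

Lemma coef_odd_parts m : (\prod_l odd_part l)@_m =
  #|[pred f : {ffun L -> 'I_2} | supp_in odd_size f && (wsum f == m)]|%:R.
Proof. by rewrite prod_sum_boolX mcoeff_sum_boolX. Qed.

Lemma coef_even_parts m : ((1 + letters) * \prod_l even_part l)@_m =
  #|[pred x : option 'I_k * {ffun L -> 'I_n.+1} |
     supp_in (predC odd_size) x.2 &&
     ((wt (flatten (optletter x.1)) + wsum x.2)%MM == m)]|%:R.
Proof.
rewrite one_plus_letters prod_sum_boolX mulr_suml.
under eq_bigr do rewrite mulr_sumr.
rewrite pair_bigA /=; under eq_bigr do rewrite -scalerAr -mpolyXD.
by rewrite mcoeff_sum_boolX.
Qed.

End LyndonSeries.

Theorem proposition3p2 (n : nat) (alpha : seq nat) :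
  (1 <= n)%N ->
  all (fun a => 0 < a)%N alpha ->
  sumn alpha = n ->
  #|[set w : n.-tuple 'I_(size alpha) |
       `[< in_Wo (val w) /\ has_weight alpha (val w) >]]| =
  #|[set w : n.-tuple 'I_(size alpha) |
       `[< in_We (val w) /\ has_weight alpha (val w) >]]|.
Proof.
move=> _ _ sum_alpha; set k := size alpha.
pose beta : 'X_{1..k} := [multinom nth 0 alpha i | i < k].
have deg_beta : mdeg beta = n.
  rewrite mdegE -sum_alpha sumnE (big_nth 0) big_mkord.
  by apply: eq_bigr => i _; rewrite mnmE.
have classE (In : word k -> Prop) (Q : pred (seq (word k))) :
    (forall w, In w <-> Q (lfactors w)) ->
    [set w : n.-tuple 'I_k | `[< In (val w) /\ has_weight alpha (val w) >]] =
    [set t : n.-tuple 'I_k | Q (lfactors t) && (wt t == beta)].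
  move=> InQ; apply/setP => t; rewrite !inE; apply/asboolP/andP.
    by case=> /InQ Qt wt_t; split=> //; apply/eqP/mnmP => i; rewrite wtE mnmE wt_t.
  by case=> /InQ Qt /eqP wt_t; split=> // i; rewrite -wtE wt_t mnmE.
rewrite (classE _ _ (@in_WoE k)) (classE _ _ (@in_WeE k)).
rewrite -(card_Wo deg_beta (leqnn n)) -(card_We deg_beta (leqnn n)).
apply/eqP; rewrite -(eqr_nat int) -coef_odd_parts -coef_even_parts.
by rewrite (odd_even_parts (n := n)) ?deg_beta.
Qed.
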